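(* Let $L$ be a Noetherian $\Sigma$-pseudofield such that $L^\sigma$ is a $\Sigma_1$-closed pseudofield. Then there exists a Noetherian $\Sigma_0$-pseudofield $B$ such that $L\cong F_{\Sigma_1}(B)$ as $\Sigma$-rings.
   Context: All rings are commutative with $1$. Fix $\Sigma_0=\mathbb Z$ with generator $\sigma$, a finite abelian group $\Sigma_1=\mathbb Z/t_1\mathbb Z\oplus\dots\oplus\mathbb Z/t_s\mathbb Z$ ($t_i\ge2$), and $\Sigma=\Sigma_0\oplus\Sigma_1$. For a subgroup $\Sigma'\subseteq\Sigma$, a $\Sigma'$-ring is a ring with an action of $\Sigma'$ by ring automorphisms; $\Sigma'$-ideals are $\Sigma'$-stable ideals; $L^\sigma$ is the ring of $\sigma$-invariants. A $\Sigma'$-ring is $\Sigma'$-simple if its only $\Sigma'$-ideals are $0$ and itself ($\neq0$). A ring is absolutely flat if every module over it is flat. A $\Sigma'$-pseudofield is an absolutely flat $\Sigma'$-simple ring; Noetherian if it is a Noetherian ring. A $\Sigma_1$-pseudofield $C$ is $\Sigma_1$-closed if $\sqrt I=\mathbb I(\mathbb V(I))$ for every $n$ and every $\Sigma_1$-ideal $I$ of the difference polynomial ring $C\{y_1,\dots,y_n\}_{\Sigma_1}$ (polynomial ring in indeterminates $\tau y_i$, $\tau\in\Sigma_1$), where $\mathbb V$ is the common zero set in $C^n$ and $\mathbb I$ the ideal of vanishing polynomials. For a $\Sigma_0$-ring $B$, $F_{\Sigma_1}(B)=\prod_{\mu\in\Sigma_1}B=\{f:\Sigma_1\to B\}$ with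 $\Sigma_0$ acting componentwise and $\Sigma_1$ acting by $(\mu f)(\tau)=f(\mu^{-1}\tau)$; this is a $\Sigma$-ring. *)

From HB Require Import structures.
From mathcomp Require Import all_boot all_order all_algebra all_fingroup.
From mathcomp Require Import mpoly.
Set Implicit Arguments. Unset Strict Implicit. Unset Printing Implicit Defensive.
Import GRing.Theory.
Local Open Scope ring_scope.

Section RingBasics.
Variable R : comNzRingType.

Definition is_ring_endo (f : R -> R) : Prop :=
  [/\ f 1 = 1, (forall x y, f (x + y) = f x + f y)
    & (forall x y, f (x * y) = f x * f y)].

Definition is_ring_auto (f : R -> R) : Prop := is_ring_endo f /\ bijective f.

Definition is_ideal (I : R -> Prop) : Prop :=
  [/\ I 0, (forall x y, I x -> I y -> I (x + y))
    & (forall r x, I x -> I (r * x))].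

Definition in_ideal_gen (s : seq R) (x : R) : Prop :=
  exists c : 'I_(size s) -> R, x = \sum_(i < size s) c i * s`_i.

Definition noetherian : Prop :=
  forall I : R -> Prop, is_ideal I ->
    exists s : seq R, forall x, I x <-> in_ideal_gen s x.

(* Flatness of an R-module, through the equational criterion (there is no
   tensor product of modules in the libraries): every relation
   sum a_i m_i = 0 is a consequence of relations in R. *)
Definition flat_module (M : lmodType R) : Prop :=
  forall (k : nat) (a : 'I_k -> R) (m : 'I_k -> M),
    \sum_(i < k) a i *: m i = 0 ->
    exists (l : nat) (b : 'I_k -> 'I_l -> R) (y : 'I_l -> M),
      (forall i, m i = \sum_(j < l) b i j *: y j) /\
      (forall j, \sum_(i < k) a i * b i j = 0).

Definition absolutely_flat : Prop := forall M : lmodType R, flat_module M.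

End RingBasics.

(* Actions.  Sigma0 = Z acts through the automorphism sigma (generator);
   the finite abelian group Sigma1 is a finGroupType G (written
   multiplicatively) acting through act : G -> R -> R.                 *)
Section Actions.
Variables (G : finGroupType) (R : comNzRingType).

Definition is_group_action (act : G -> R -> R) : Prop :=
  [/\ (forall g, is_ring_endo (act g)),
      (forall x, act 1%g x = x)
    & (forall g h x, act (g * h)%g x = act g (act h x))].

Definition is_sigma0_ring (sig : R -> R) : Prop := is_ring_auto sig.
Definition is_sigma1_ring (act : G -> R -> R) : Prop := is_group_action act.
Definition is_sigma_ring (sig : R -> R) (act : G -> R -> R) : Prop :=
  [/\ is_ring_auto sig, is_group_action act
    & (forall g x, sig (act g x) = act g (sig x))].

(* stability of a subset under the subgroup Sigma0 = <sigma> (i.e. under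
   sigma and sigma^-1) and under Sigma1 *)
Definition sigma0_stable (sig : R -> R) (I : R -> Prop) : Prop :=
  forall x, I x <-> I (sig x).
Definition sigma1_stable (act : G -> R -> R) (I : R -> Prop) : Prop :=
  forall g x, I x -> I (act g x).

Definition trivial_or_full (I : R -> Prop) : Prop :=
  (forall x, I x -> x = 0) \/ (forall x, I x).

(* simplicity (the ring is nonzero since R is a comNzRingType) *)
Definition sigma0_simple (sig : R -> R) : Prop :=
  forall I, is_ideal I -> sigma0_stable sig I -> trivial_or_full I.
Definition sigma1_simple (act : G -> R -> R) : Prop :=
  forall I, is_ideal I -> sigma1_stable act I -> trivial_or_full I.
Definition sigma_simple (sig : R -> R) (act : G -> R -> R) : Prop :=
  forall I, is_ideal I -> sigma0_stable sig I -> sigma1_stable act I ->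
    trivial_or_full I.

Definition sigma0_pseudofield (sig : R -> R) : Prop :=
  [/\ is_sigma0_ring sig, absolutely_flat R & sigma0_simple sig].
Definition sigma1_pseudofield (act : G -> R -> R) : Prop :=
  [/\ is_sigma1_ring act, absolutely_flat R & sigma1_simple act].
Definition sigma_pseudofield (sig : R -> R) (act : G -> R -> R) : Prop :=
  [/\ is_sigma_ring sig act, absolutely_flat R & sigma_simple sig act].

End Actions.

Section Fixed.
Variables (L : comNzRingType) (s : {rmorphism L -> L}).

Definition fixed_pred : pred L := [pred x | s x == x].

Lemma fixed_subring_closed : subring_closed fixed_pred.
Proof.
split=> [|x y|x y]; rewrite !inE ?rmorph1 //.
  by move=> /eqP sx /eqP sy; rewrite rmorphB sx sy.
by move=> /eqP sx /eqP sy; rewrite rmorphM sx sy.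
Qed.

HB.instance Definition _ :=
  GRing.isSubringClosed.Build L fixed_pred fixed_subring_closed.

Record fixring := FixRing { fix_val :> L; _ : fix_val \in fixed_pred }.
HB.instance Definition _ := [isSub for fix_val].
HB.instance Definition _ := [Choice of fixring by <:].
HB.instance Definition _ := [SubChoice_isSubComNzRing of fixring by <:].

(* the action of Sigma1 restricted to L^sigma (it preserves L^sigma when it
   commutes with sigma; insubd only makes the function total) *)
Definition fix_act (G : finGroupType) (act : G -> L -> L) (g : G)
  (x : fixring) : fixring := insubd x (act g (fix_val x)).

End Fixed.
Arguments fix_act {L} s {G} act g x.

(* Difference polynomial ring C{y_1..y_n}_{Sigma1}: polynomials over C in
   the indeterminates tau y_i, (tau, i) in G * 'I_n (enumerated by
   enum_rank).                                                         *)
Section DiffPoly.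
Variables (G : finGroupType) (C : comNzRingType) (act : G -> C -> C) (n : nat).

Notation dpoly := {mpoly C[#|{: G * 'I_n}|]}.

Definition dX (tau : G) (i : 'I_n) : dpoly := 'X_(enum_rank (tau, i)).

Definition dpoly_act (mu : G) (p : dpoly) : dpoly :=
  mmap (fun c => (act mu c)%:MP)
       (fun j => let v := enum_val j in dX (mu * v.1)%g v.2) p.

Definition deval (a : 'I_n -> C) (p : dpoly) : C :=
  p.@[fun j => let v := enum_val j in act v.1 (a v.2)].

Definition dV (I : dpoly -> Prop) (a : 'I_n -> C) : Prop :=
  forall p, I p -> deval a p = 0.
Definition dI (V : ('I_n -> C) -> Prop) (p : dpoly) : Prop :=
  forall a, V a -> deval a p = 0.

Definition radical (I : dpoly -> Prop) (p : dpoly) : Prop :=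
  exists m : nat, I (p ^+ m).

Definition dpoly_sigma1_ideal (I : dpoly -> Prop) : Prop :=
  is_ideal I /\ forall mu p, I p -> I (dpoly_act mu p).

End DiffPoly.

Definition sigma1_closed (G : finGroupType) (C : comNzRingType)
  (act : G -> C -> C) : Prop :=
  sigma1_pseudofield act /\
  forall (n : nat) (I : {mpoly C[#|{: G * 'I_n}|]} -> Prop),
    dpoly_sigma1_ideal act I ->
    forall p, radical I p <-> dI act (dV act I) p.

(* Isomorphism of Sigma-rings  L ~= F_{Sigma1}(B) = {ffun Sigma1 -> B}
   (componentwise ring structure and sigma-action; (mu f)(tau) =
   f (mu^-1 tau)).                                                     *)
Definition sigma_iso_F (G : finGroupType) (L B : comNzRingType)
  (sL : L -> L) (actL : G -> L -> L) (sB : B -> B)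
  (phi : L -> {ffun G -> B}) : Prop :=
  bijective phi /\
  [/\ phi 1 = [ffun => 1],
      (forall x y, phi (x + y) = [ffun t => phi x t + phi y t]),
      (forall x y, phi (x * y) = [ffun t => phi x t * phi y t]),
      (forall x, phi (sL x) = [ffun t => sB (phi x t)])
    & (forall mu x, phi (actL mu x) = [ffun t => phi x (mu^-1 * t)%g])].

(* Sigma1-closedness of L^sigma produces the idempotent we need: the
   one-variable difference polynomials y_nu^2 - y_nu, y_nu y_nu' (nu <> nu')
   and sum_nu y_nu - 1 lie in a proper Sigma1-ideal (the polynomials all of
   whose translates vanish at every point y_nu |-> [nu = t]), hence have a
   common zero c in L^sigma.  The translates nu c then form a complete system
   of orthogonal idempotents of L permuted simply transitively by Sigma1, so
   x |-> (t |-> c * t^-1 x) is an isomorphism of Sigma-rings from L onto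
   F_Sigma1(cL), with inverse f |-> sum_t t (f t).  The ring B = cL is a
   quotient of L, hence absolutely flat and Noetherian, and sigma-simplicity
   of B follows from Sigma-simplicity of L. *)

From HB Require Import structures.
From mathcomp Require Import all_boot all_order all_algebra all_fingroup.
From mathcomp Require Import mpoly.
From Stdlib Require Import Classical.
Set Implicit Arguments. Unset Strict Implicit. Unset Printing Implicit Defensive.
Import GRing.Theory.
Local Open Scope ring_scope.

Section RingEndo.
Variables (R : comNzRingType) (f : R -> R).
Hypothesis f_endo : is_ring_endo f.

Lemma endoD x y : f (x + y) = f x + f y. Proof. by case: f_endo. Qed.
Lemma endoM x y : f (x * y) = f x * f y. Proof. by case: f_endo. Qed.
Lemma endo1 : f 1 = 1. Proof. by case: f_endo. Qed.
Lemma endo0 : f 0 = 0.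
Proof. by apply/(@addrI _ (f 0)); rewrite -endoD !addr0. Qed.
Lemma endoN x : f (- x) = - f x.
Proof. by apply/(@addrI _ (f x)); rewrite -endoD !subrr endo0. Qed.
Lemma endo_sum I (r : seq I) (P : pred I) (F : I -> R) :
  f (\sum_(i <- r | P i) F i) = \sum_(i <- r | P i) f (F i).
Proof. exact: (big_morph _ endoD endo0). Qed.

End RingEndo.

Definition nzidem (L : comNzRingType) := {e : L | (e * e == e) && (e != 0)}.

Section Corner.
Variables (L : comNzRingType) (e : nzidem L).
Local Notation e0 := (sval e).

Lemma nzidemM : e0 * e0 = e0.
Proof. by case: e => x /= /andP[/eqP]. Qed.
Lemma nzidem_neq0 : e0 != 0.
Proof. by case: e => x /= /andP[]. Qed.

Definition corner_pred : pred L := [pred x | x * e0 == x].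

Lemma corner_pred_zmod_closed : zmod_closed corner_pred.
Proof.
split=> [|x y]; rewrite !inE ?mul0r //.
by move=> /eqP xe /eqP ye; rewrite mulrBl xe ye.
Qed.
HB.instance Definition _ :=
  GRing.isZmodClosed.Build L corner_pred corner_pred_zmod_closed.

Record corner := Corner { corner_val :> L; _ : corner_val \in corner_pred }.
HB.instance Definition _ := [isSub for corner_val].
HB.instance Definition _ := [Choice of corner by <:].
HB.instance Definition _ := [SubChoice_isSubZmodule of corner by <:].

Lemma corner_valMe (x : corner) : corner_val x * e0 = corner_val x.
Proof. by case: x => x /= /eqP. Qed.

Lemma corner_mul_subproof (x y : corner) : corner_val x * corner_val y \in corner_pred.
Proof. by rewrite inE -mulrA corner_valMe. Qed.
Lemma corner_one_subproof : e0 \in corner_pred.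
Proof. by rewrite inE nzidemM. Qed.

Definition corner_mul (x y : corner) := Corner (corner_mul_subproof x y).
Definition corner_one := Corner corner_one_subproof.

Lemma corner_mulA : associative corner_mul.
Proof. by move=> x y z; apply: val_inj; rewrite /= mulrA. Qed.
Lemma corner_mulC : commutative corner_mul.
Proof. by move=> x y; apply: val_inj; rewrite /= mulrC. Qed.
Lemma corner_mul1 : left_id corner_one corner_mul.
Proof. by move=> x; apply: val_inj; rewrite /= mulrC corner_valMe. Qed.
Lemma corner_mulDl : left_distributive corner_mul +%R.
Proof. by move=> x y z; apply: val_inj; rewrite /= mulrDl. Qed.
Lemma corner_one_neq0 : corner_one != 0.
Proof. by apply/eqP => /(congr1 val) /= /eqP; rewrite (negbTE nzidem_neq0). Qed.

HB.instance Definition _ := GRing.Zmodule_isComNzRing.Build corner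
  corner_mulA corner_mulC corner_mul1 corner_mulDl corner_one_neq0.

Lemma corner_proj_subproof (x : L) : x * e0 \in corner_pred.
Proof. by rewrite inE -mulrA nzidemM. Qed.
Definition corner_proj (x : L) : corner := Corner (corner_proj_subproof x).

Lemma corner_projE x : corner_val (corner_proj x) = x * e0. Proof. by []. Qed.

Lemma corner_proj_is_zmod_morphism : zmod_morphism corner_proj.
Proof. by move=> x y; apply: val_inj; rewrite /= mulrBl. Qed.
Lemma corner_proj_is_monoid_morphism : monoid_morphism corner_proj.
Proof.
split=> [|x y]; apply: val_inj; rewrite /= ?mul1r //.
by rewrite mulrACA nzidemM.
Qed.
HB.instance Definition _ :=
  GRing.isZmodMorphism.Build L corner corner_proj corner_proj_is_zmod_morphism.
HB.instance Definition _ :=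
  GRing.isMonoidMorphism.Build L corner corner_proj corner_proj_is_monoid_morphism.

Lemma corner_valK : cancel corner_val corner_proj.
Proof. by move=> x; apply: val_inj; rewrite /= corner_valMe. Qed.

End Corner.

Lemma ideal_sum (R : comNzRingType) (I : R -> Prop) (J : Type) (r : seq J) (F : J -> R) :
  is_ideal I -> (forall j, I (F j)) -> I (\sum_(j <- r) F j).
Proof.
case=> I0 ID _ IF; elim: r => [|j r IHr]; first by rewrite big_nil.
by rewrite big_cons; apply: ID.
Qed.

Lemma in_ideal_gen_mem (R : comNzRingType) (s : seq R) (i : 'I_(size s)) :
  in_ideal_gen s s`_i.
Proof.
exists (fun j => (j == i)%:R); rewrite (bigD1 i) //= eqxx mul1r big1 ?addr0 //.
by move=> j /negbTE ->; rewrite mul0r.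
Qed.

Section SplitSurjection.
Variables (R S : comNzRingType) (f : {rmorphism R -> S}) (g : S -> R).
Hypothesis gK : cancel g f.

Lemma noetherian_split_surj : noetherian R -> noetherian S.
Proof.
move=> noethR J [J0 JD JM].
have preJ_ideal : is_ideal (fun x => J (f x)).
  split=> [|x y Jx Jy|r x Jx]; rewrite ?rmorph0 ?rmorphD ?rmorphM //.
  - exact: JD.
  - exact: JM.
have [s gen_s] := noethR _ preJ_ideal.
exists (map f s) => y; rewrite /in_ideal_gen size_map; split.
  rewrite -{1}[y]gK => /gen_s [c def_gy]; exists (fun i => f (c i)).
  by rewrite -[y]gK def_gy rmorph_sum; apply: eq_bigr => i _; rewrite rmorphM (nth_map 0).
move=> [c ->]; apply: ideal_sum => // i; apply: JM.
by rewrite (nth_map 0) //; apply/gen_s/in_ideal_gen_mem.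
Qed.

Section RestrictScalars.
Variable M : lmodType S.

Definition restrict : Type := M.
HB.instance Definition _ := GRing.Zmodule.on restrict.

Definition restrict_scale (r : R) (m : restrict) : restrict := (f r *: (m : M)).

Lemma restrict_scaleA a b v :
  restrict_scale a (restrict_scale b v) = restrict_scale (a * b) v.
Proof. by rewrite /restrict_scale scalerA rmorphM. Qed.
Lemma restrict_scale1 : left_id 1 restrict_scale.
Proof. by move=> v; rewrite /restrict_scale rmorph1 scale1r. Qed.
Lemma restrict_scaleDr : right_distributive restrict_scale +%R.
Proof. by move=> a u v; rewrite /restrict_scale scalerDr. Qed.
Lemma restrict_scaleDl v : {morph restrict_scale^~ v : a b / a + b}.
Proof. by move=> a b; rewrite /restrict_scale rmorphD scalerDl. Qed.
HB.instance Definition _ := GRing.Zmodule_isLmodule.Build R restrict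
  restrict_scaleA restrict_scale1 restrict_scaleDr restrict_scaleDl.

End RestrictScalars.

Lemma absolutely_flat_split_surj : absolutely_flat R -> absolutely_flat S.
Proof.
move=> flatR M k a m rel.
have rel' : \sum_(i < k) g (a i) *: (m i : restrict M) = 0.
  rewrite -{}[RHS]rel; apply: eq_bigr => i _.
  by rewrite [LHS]/GRing.scale /= /restrict_scale gK.
have [l [b [y [def_m relb]]]] := flatR (restrict M) k _ m rel'.
exists l, (fun i j => f (b i j)), y; split => // j.
rewrite -[RHS](rmorph0 f) -(relb j) rmorph_sum.
by apply: eq_bigr => i _; rewrite rmorphM gK.
Qed.

End SplitSurjection.

Section CornerMap.
Variables (L : comNzRingType) (e : nzidem L) (f : {rmorphism L -> L}).
Hypothesis fe : f (sval e) = sval e.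

Definition corner_map (x : corner e) : corner e := corner_proj e (f (corner_val x)).

Lemma corner_map_auto : bijective f -> is_ring_auto corner_map.
Proof.
case=> g fK gK; split.
  split=> [|x y|x y]; apply: val_inj => /=.
  - by rewrite fe nzidemM.
  - by rewrite rmorphD mulrDl.
  - by rewrite rmorphM mulrACA nzidemM.
have gM x y : g (x * y) = g x * g y.
  by apply: (can_inj fK); rewrite rmorphM !gK.
have ge : g (sval e) = sval e by rewrite -{1}fe fK.
exists (fun x => corner_proj e (g (corner_val x))) => x; apply: val_inj.
  by rewrite /= gM fK ge -mulrA nzidemM corner_valMe.
by rewrite /= rmorphM gK fe -mulrA nzidemM corner_valMe.
Qed.

End CornerMap.
Arguments corner_map {L} e f x.

Definition translate_partition (G : finGroupType) (R : comNzRingType)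
    (act : G -> R -> R) (c : R) :=
  [/\ forall nu, act nu c * act nu c = act nu c,
      forall nu nu', nu != nu' -> act nu c * act nu' c = 0
    & \sum_nu act nu c = 1].

Section Splitting.
Variables (G : finGroupType) (L : comNzRingType) (sL : {rmorphism L -> L})
  (a : G -> L -> L) (e : nzidem L).
Hypotheses (a_action : is_group_action a)
  (sL_a : forall g x, sL (a g x) = a g (sL x))
  (sL_e : sL (sval e) = sval e) (e_part : translate_partition a (sval e)).

Local Notation e0 := (sval e).
Local Notation B := (corner e).

Let a_endo g : is_ring_endo (a g). Proof. by case: a_action. Qed.
Let a1 x : a 1%g x = x. Proof. by case: a_action. Qed.
Let aM g h x : a (g * h)%g x = a g (a h x). Proof. by case: a_action. Qed.

Lemma translate_partition_orth g : g != 1%g -> a g e0 * e0 = 0.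
Proof. by case: e_part => _ orth _ ne1; rewrite -{2}[e0]a1 orth. Qed.

Lemma translate_mul_corner g (y : B) : g != 1%g -> a g (corner_val y) * e0 = 0.
Proof.
move=> ne1; rewrite -(corner_valMe y) (endoM (a_endo g)) -mulrA.
by rewrite translate_partition_orth ?mulr0.
Qed.

Definition split_map (x : L) : {ffun G -> B} := [ffun t => corner_proj e (a t^-1 x)].
Definition split_inv (f : {ffun G -> B}) : L := \sum_t a t (corner_val (f t)).

Lemma split_mapK : cancel split_map split_inv.
Proof.
move=> x; rewrite /split_inv (eq_bigr (fun t => x * a t e0)) => [|t _].
  by rewrite -mulr_sumr; case: e_part => _ _ ->; rewrite mulr1.
by rewrite ffunE corner_projE (endoM (a_endo t)) -aM mulgV a1.
Qed.

Lemma split_invK : cancel split_inv split_map.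
Proof.
move=> f; apply/ffunP => t; apply: val_inj => /=; rewrite ffunE corner_projE /split_inv.
rewrite (endo_sum (a_endo _)) mulr_suml (bigD1 t) //= big1 ?addr0.
  by rewrite -aM mulVg a1 corner_valMe.
move=> u ne_ut; rewrite -aM translate_mul_corner //.
by apply: contra ne_ut => /eqP/(congr1 (fun u => t * u)%g); rewrite mulKVg mulg1 => ->.
Qed.

Lemma split_map_sigma_iso : sigma_iso_F sL a (corner_map e sL) split_map.
Proof.
split; first by exists split_inv; [exact: split_mapK | exact: split_invK].
split=> [|x y|x y|x|mu x]; apply/ffunP => t; rewrite !ffunE.
- by rewrite (endo1 (a_endo _)) rmorph1.
- by rewrite (endoD (a_endo _)) rmorphD.
- by rewrite (endoM (a_endo _)) rmorphM.
- by apply: val_inj => /=; rewrite rmorphM sL_e sL_a -mulrA nzidemM.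
- by rewrite -aM invMg invgK.
Qed.

Lemma corner_sigma0_simple : sigma_simple sL a -> sigma0_simple (corner_map e sL).
Proof.
move=> simpleL J J_ideal J_stable.
have [J0 JD JM] := J_ideal.
pose I x := forall t, J (split_map x t).
have I_ideal : is_ideal I.
  split=> [t|x y Ix Iy t|r x Ix t].
  - by rewrite ffunE (endo0 (a_endo _)) rmorph0.
  - rewrite ffunE (endoD (a_endo _)) rmorphD; apply: JD.
      by move: (Ix t); rewrite ffunE.
    by move: (Iy t); rewrite ffunE.
  - by rewrite ffunE (endoM (a_endo _)) rmorphM; apply: JM; move: (Ix t); rewrite !ffunE.
have split_mapS x t : split_map (sL x) t = corner_map e sL (split_map x t).
  by case: split_map_sigma_iso => _ [_ _ _ -> _]; rewrite ffunE.
have I_sigma0 : sigma0_stable sL I.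
  by move=> x; split=> Ix t; move: (Ix t); rewrite split_mapS -J_stable.
have I_sigma1 : sigma1_stable a I.
  by move=> g x Ix t; case: split_map_sigma_iso => _ [_ _ _ _ ->]; rewrite ffunE.
have split_map_corner (y : B) t :
    split_map (corner_val y) t = if t == 1%g then y else 0.
  apply: val_inj => /=; rewrite ffunE /=; case: eqP => [->|/eqP ne1] /=.
    by rewrite invg1 a1 corner_valMe.
  by rewrite translate_mul_corner ?eq_invg1.
case: (simpleL I I_ideal I_sigma0 I_sigma1) => [I0|Ifull]; [left|right].
  move=> y Jy; apply: val_inj; apply: I0 => t.
  by rewrite split_map_corner; case: ifP.
move=> y; rewrite -[y]mulr1; apply: JM.
by have := Ifull 1 1%g; rewrite ffunE (endo1 (a_endo _)) rmorph1.
Qed.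

End Splitting.

Section DeltaIdeal.
Variables (G : finGroupType) (C : comNzRingType) (act : G -> C -> C).
Hypothesis act_endo : forall g, is_ring_endo (act g).

Local Notation dpoly := {mpoly C[#|{: G * 'I_1}|]}.

Definition coef_act (g : G) (c : C) : dpoly := (act g c)%:MP.

Lemma coef_act_is_zmod_morphism g : zmod_morphism (coef_act g).
Proof.
by move=> x y; rewrite /coef_act (endoD (act_endo g)) (endoN (act_endo g)) rmorphB.
Qed.
Lemma coef_act_is_monoid_morphism g : monoid_morphism (coef_act g).
Proof.
split=> [|x y]; rewrite /coef_act; first by rewrite (endo1 (act_endo g)) rmorph1.
by rewrite (endoM (act_endo g)) rmorphM.
Qed.
HB.instance Definition _ g :=
  GRing.isZmodMorphism.Build C dpoly (coef_act g) (coef_act_is_zmod_morphism g).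
HB.instance Definition _ g :=
  GRing.isMonoidMorphism.Build C dpoly (coef_act g) (coef_act_is_monoid_morphism g).

Lemma dpoly_act_is_zmod_morphism g : zmod_morphism (dpoly_act act (n:=1) g).
Proof. exact: (rmorphB (mmap (coef_act g) _)). Qed.
Lemma dpoly_act_is_monoid_morphism g : monoid_morphism (dpoly_act act (n:=1) g).
Proof.
split=> [|p q]; first exact: (rmorph1 (mmap (coef_act g) _)).
exact: (rmorphM (mmap (coef_act g) _)).
Qed.
HB.instance Definition _ g := GRing.isZmodMorphism.Build dpoly dpoly
  (dpoly_act act g) (dpoly_act_is_zmod_morphism g).
HB.instance Definition _ g := GRing.isMonoidMorphism.Build dpoly dpoly
  (dpoly_act act g) (dpoly_act_is_monoid_morphism g).

Lemma dpoly_actX mu nu (i : 'I_1) : dpoly_act act mu (dX C nu i) = dX C (mu * nu)%g i.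
Proof.
by rewrite -[dpoly_act _ _ _]/(mmap (coef_act mu) _ _) /dX mmapX mmap1U enum_rankK.
Qed.

Definition dpoly_acts (l : seq G) (p : dpoly) : dpoly := foldr (dpoly_act act (n:=1)) p l.

Lemma dpoly_acts_cons mu l p :
  dpoly_acts (mu :: l) p = dpoly_act act mu (dpoly_acts l p).
Proof. by []. Qed.

Lemma dpoly_acts_is_zmod_morphism l : zmod_morphism (dpoly_acts l).
Proof. by elim: l => // mu l IHl p q; rewrite !dpoly_acts_cons IHl rmorphB. Qed.
Lemma dpoly_acts_is_monoid_morphism l : monoid_morphism (dpoly_acts l).
Proof.
elim: l => [|mu l [IH1 IHM]] //; split=> [|p q]; rewrite !dpoly_acts_cons.
  by rewrite IH1 rmorph1.
by rewrite IHM rmorphM.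
Qed.
HB.instance Definition _ l := GRing.isZmodMorphism.Build dpoly dpoly
  (dpoly_acts l) (dpoly_acts_is_zmod_morphism l).
HB.instance Definition _ l := GRing.isMonoidMorphism.Build dpoly dpoly
  (dpoly_acts l) (dpoly_acts_is_monoid_morphism l).

Definition delta (t : G) (j : 'I_#|{: G * 'I_1}|) : C := ((enum_val j).1 == t)%:R.

Definition delta_ideal (p : dpoly) : Prop :=
  forall l t, (dpoly_acts l p).@[delta t] = 0.

Lemma delta_ideal_sigma1 : dpoly_sigma1_ideal act delta_ideal.
Proof.
split; first split.
- by move=> l t; rewrite !rmorph0.
- by move=> p q Ip Iq l t; rewrite !rmorphD /= Ip Iq addr0.
- by move=> r p Ip l t; rewrite !rmorphM /= Ip mulr0.
by move=> mu p Ip l t; rewrite /dpoly_acts -foldr_rcons; apply: Ip.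
Qed.

Lemma delta_ideal_neq1 : ~ delta_ideal 1.
Proof. by move=> /(_ [::] 1%g); rewrite !rmorph1; apply/eqP; rewrite oner_eq0. Qed.

Local Notation y_ nu := (dX C nu ord0).

Definition partition_rel (p : dpoly) : Prop :=
  [\/ exists nu, p = y_ nu * y_ nu - y_ nu,
      exists nu nu', nu != nu' /\ p = y_ nu * y_ nu'
    | p = \sum_nu y_ nu - 1].

Lemma partition_rel_act mu p : partition_rel p -> partition_rel (dpoly_act act mu p).
Proof.
case=> [[nu ->]|[nu [nu' [ne ->]]]|->]; rewrite ?rmorphB ?rmorphM ?rmorph1 /= ?dpoly_actX.
- by apply: Or31; exists (mu * nu)%g.
- by apply: Or32; exists (mu * nu)%g, (mu * nu')%g; rewrite (inj_eq (mulgI mu)).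
apply: Or33; rewrite rmorph_sum /= [in RHS](reindex_inj (mulgI mu)) /=.
by congr (_ - _); apply: eq_bigr => nu _; rewrite dpoly_actX.
Qed.

Lemma delta_y t nu : (y_ nu).@[delta t] = (nu == t)%:R.
Proof. by rewrite /dX mevalXU /delta enum_rankK. Qed.

Lemma partition_rel_delta t p : partition_rel p -> p.@[delta t] = 0.
Proof.
case=> [[nu ->]|[nu [nu' [ne ->]]]|->];
  rewrite ?rmorphB ?rmorphM ?rmorph1 ?rmorph_sum /= ?delta_y.
- by case: eqP; rewrite ?mulr1 ?mulr0 subrr.
- case: (eqVneq nu t) => [nu_t|]; last by rewrite mul0r.
  by case: (eqVneq nu' t) => [nu'_t|]; [move: ne; rewrite nu_t nu'_t eqxx | rewrite mulr0].
rewrite (bigD1 t) //= big1 => [|nu ne]; last by rewrite delta_y (negbTE ne).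
by rewrite delta_y eqxx addr0 subrr.
Qed.

Lemma partition_rel_delta_ideal p : partition_rel p -> delta_ideal p.
Proof.
move=> rel_p l t; apply: partition_rel_delta.
by elim: l => //= mu l IHl; apply: partition_rel_act.
Qed.

End DeltaIdeal.

Lemma nullstellensatz_translate_partition (G : finGroupType) (C : comNzRingType)
    (act : G -> C -> C) :
  (forall g, is_ring_endo (act g)) ->
  (forall I : {mpoly C[#|{: G * 'I_1}|]} -> Prop,
     dpoly_sigma1_ideal act I -> forall p, dI act (dV act I) p -> radical I p) ->
  exists c, translate_partition act c.
Proof.
move=> act_endo nullst.
have [a Va] : exists a, dV act (delta_ideal act) a.
  apply: NNPP => noV.
  have vanish1 : dI act (dV act (delta_ideal act)) 1 by move=> a Va; case: noV; exists a.
  have [m] := nullst _ (delta_ideal_sigma1 act_endo) 1 vanish1.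
  by rewrite expr1n; apply: delta_ideal_neq1.
pose pt (j : 'I_#|{: G * 'I_1}|) := act (enum_val j).1 (a (enum_val j).2).
have rel0 p : partition_rel p -> p.@[pt] = 0.
  by move=> rel_p; apply/(Va p)/partition_rel_delta_ideal.
have pt_y nu : (dX C nu ord0).@[pt] = act nu (a ord0).
  by rewrite /dX mevalXU /pt enum_rankK.
exists (a ord0); split.
- move=> nu; apply/eqP; rewrite -subr_eq0 -!pt_y -rmorphM -rmorphB.
  by apply/eqP/rel0; apply: Or31; exists nu.
- move=> nu nu' ne; rewrite -!pt_y -rmorphM.
  by apply: rel0; apply: Or32; exists nu, nu'.
apply/eqP; rewrite -subr_eq0 -(eq_bigr _ (fun nu _ => pt_y nu)) -rmorph_sum.
rewrite -(rmorph1 (meval pt)) -rmorphB.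
by apply/eqP/rel0; apply: Or33.
Qed.

Section FixedRing.
Variables (G : finGroupType) (L : comNzRingType) (s : {rmorphism L -> L})
  (act : G -> L -> L).
Hypothesis s_act : forall g x, s (act g x) = act g (s x).

Lemma fix_actE g (x : fixring s) : fix_val (fix_act s act g x) = act g (fix_val x).
Proof.
have sx : s (fix_val x) = fix_val x by apply/eqP; exact: (valP x).
by rewrite /fix_act val_insubd inE s_act sx eqxx.
Qed.

Lemma translate_partition_fix_val (c : fixring s) :
  translate_partition (fix_act s act) c -> translate_partition act (fix_val c).
Proof.
case=> idem orth sum1; split=> [nu|nu nu' ne|].
- by rewrite -!fix_actE -(rmorphM val) idem.
- by rewrite -!fix_actE -(rmorphM val) orth ?rmorph0.
under eq_bigr do rewrite -fix_actE.
by rewrite -(rmorph_sum val) sum1 rmorph1.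
Qed.

End FixedRing.

Lemma translate_partition_nzidem (G : finGroupType) (R : comNzRingType)
    (act : G -> R -> R) (c : R) :
  is_group_action act -> translate_partition act c -> (c * c == c) && (c != 0).
Proof.
case=> act_endo act1 _ [idem _ sum1].
rewrite -{1 2 3}[c]act1 idem eqxx /=; apply: contra_neq (@oner_neq0 R) => c0.
by rewrite -sum1 big1 // => nu _; rewrite c0 (endo0 (act_endo nu)).
Qed.

Theorem proposition7 (G : finGroupType) (L : comNzRingType)
  (sL : {rmorphism L -> L}) (actL : G -> L -> L) :
  abelian [set: G] ->
  sigma_pseudofield sL actL ->
  noetherian L ->
  sigma1_closed (fix_act sL actL) ->
  exists (B : comNzRingType) (sB : B -> B) (phi : L -> {ffun G -> B}),
    [/\ sigma0_pseudofield sB, noetherian B & sigma_iso_F sL actL sB phi].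
Proof.
move=> _ [[[_ sL_bij] a_action sL_a] flatL simpleL] noethL [[fix_action _ _] nullst].
have fix_endo g : is_ring_endo (fix_act sL actL g) by case: fix_action.
have [c c_part] := nullstellensatz_translate_partition fix_endo
  (fun I I_ideal p => proj2 (nullst 1%N I I_ideal p)).
have e_part := translate_partition_fix_val sL_a c_part.
pose e : nzidem L := exist _ (fix_val c) (translate_partition_nzidem a_action e_part).
have sL_e : sL (sval e) = sval e by apply/eqP; exact: (valP c).
exists (corner e), (corner_map e sL), (split_map actL e); split.
- split; first exact: corner_map_auto sL_e sL_bij.
    exact: absolutely_flat_split_surj (@corner_valK _ e) flatL.
  exact: corner_sigma0_simple a_action sL_a sL_e e_part simpleL.
- exact: noetherian_split_surj (@corner_valK _ e) noethL.
- exact: split_map_sigma_iso a_action sL_a sL_e e_part.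
Qed.
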